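(* In the triangle $ABC$ with $a=8$, $b=15$, and $c=\sqrt{(353+15\sqrt{93})/2}$, the triangle center $X_{18}$ coincides with vertex $A$.
   Context: $X_n$ denotes the $n$-th triangle center listed in Kimberling's Encyclopedia of Triangle Centers (ETC) ($X_{18}$ the second Napoleon point), given by barycentric coordinates in terms of $a=BC$, $b=CA$, $c=AB$. *)

From Stdlib Require Import Reals.
Open Scope R_scope.

(* Homogeneous barycentric coordinates: a point is a nonzero triple up to
   a nonzero scalar. *)
Definition bary := (R * R * R)%type.

Definition bary_nonzero (p : bary) : Prop :=
  let '(x, y, z) := p in ~ (x = 0 /\ y = 0 /\ z = 0).

Definition same_point (p q : bary) : Prop :=
  bary_nonzero p /\ bary_nonzero q /\
  exists k : R, k <> 0 /\
    let '(x, y, z) := p in let '(u, v, w) := q in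
    x = k * u /\ y = k * v /\ z = k * w.

(* Conway notation: S = twice the area (Heron), S_A = (b^2+c^2-a^2)/2. *)
Definition twice_area (a b c : R) : R :=
  sqrt ((a + b + c) * (- a + b + c) * (a - b + c) * (a + b - c)) / 2.

Definition conwayS (a b c : R) : R := (b ^ 2 + c ^ 2 - a ^ 2) / 2.

(* X(18), second Napoleon point: trilinears csc(A - pi/6) : ..., i.e.
   barycentrics a csc(A - pi/6) = 2abc / (sqrt 3 * S - S_A) : ... .
   With f_A := sqrt 3 * S - S_A (and cyclically), we clear denominators and
   use the equivalent (and everywhere-defined) representative
   (f_B f_C : f_C f_A : f_A f_B). *)
Definition fX18 (a b c : R) : R := sqrt 3 * twice_area a b c - conwayS a b c.

Definition X18 (a b c : R) : bary :=
  let fA := fX18 a b c in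
  let fB := fX18 b c a in
  let fC := fX18 c a b in
  (fB * fC, fC * fA, fA * fB).

Definition vertexA : bary := (1, 0, 0).

(* The angle at A is 30 degrees: with a = 8, b = 15 the given c is a root of
   c^2 - 15 sqrt 3 c + 161 = 0, i.e. of the law of cosines
   b^2 + c^2 - a^2 = 2 b c cos(pi/6).  Then S = b c sin A = b c / 2 and
   S_A = b c cos A = sqrt 3 S, so the factor f_A = sqrt 3 S - S_A of the
   second Napoleon point vanishes and X18 = (f_B f_C : 0 : 0) = A, as long as
   f_B f_C <> 0, i.e. neither B nor C is also 30 degrees. *)
From Stdlib Require Import Reals Lra Psatz.
Open Scope R_scope.

Lemma sqrt3_sqr : sqrt 3 * sqrt 3 = 3.
Proof. apply sqrt_sqrt; lra. Qed.

Lemma twice_area_conwayS (a b c : R) :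
  twice_area a b c = sqrt (b ^ 2 * c ^ 2 - conwayS a b c ^ 2).
Proof.
  unfold twice_area, conwayS.
  replace ((a + b + c) * (- a + b + c) * (a - b + c) * (a + b - c))
    with (2 ^ 2 * (b ^ 2 * c ^ 2 - ((b ^ 2 + c ^ 2 - a ^ 2) / 2) ^ 2)) by field.
  rewrite sqrt_mult_alt, sqrt_pow2 by lra.
  field.
Qed.

Lemma twice_area_rotate (a b c : R) : twice_area b c a = twice_area a b c.
Proof. unfold twice_area; f_equal; f_equal; ring. Qed.

Section AngleA30.

Variables a b c : R.
Hypothesis b_gt0 : 0 < b.
Hypothesis c_gt0 : 0 < c.
Hypothesis cos_A : b ^ 2 + c ^ 2 - a ^ 2 = sqrt 3 * b * c.

Lemma twice_area_angleA30 : twice_area a b c = b * c / 2.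
Proof.
  rewrite twice_area_conwayS.
  replace (b ^ 2 * c ^ 2 - conwayS a b c ^ 2) with ((b * c / 2) ^ 2).
  - apply sqrt_pow2; nra.
  - unfold conwayS; rewrite cos_A.
    replace ((sqrt 3 * b * c / 2) ^ 2) with (sqrt 3 * sqrt 3 * (b * c / 2) ^ 2)
      by field.
    rewrite sqrt3_sqr; field.
Qed.

Lemma fX18_angleA30 : fX18 a b c = 0.
Proof.
  unfold fX18, conwayS; rewrite twice_area_angleA30, cos_A; field.
Qed.

Lemma fX18_rotate1_angleA30 : fX18 b c a = c * (sqrt 3 * b - c).
Proof.
  unfold fX18, conwayS; rewrite twice_area_rotate, twice_area_angleA30.
  replace (c ^ 2 + a ^ 2 - b ^ 2) with (2 * c ^ 2 - sqrt 3 * b * c) by lra.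
  field.
Qed.

Lemma fX18_rotate2_angleA30 : fX18 c a b = b * (sqrt 3 * c - b).
Proof.
  unfold fX18, conwayS; rewrite <- (twice_area_rotate c a b), twice_area_angleA30.
  replace (a ^ 2 + b ^ 2 - c ^ 2) with (2 * b ^ 2 - sqrt 3 * b * c) by lra.
  field.
Qed.

Theorem X18_angleA30 :
  c <> sqrt 3 * b -> b <> sqrt 3 * c -> same_point (X18 a b c) vertexA.
Proof.
  intros hB hC.
  unfold X18; rewrite fX18_angleA30, fX18_rotate1_angleA30, fX18_rotate2_angleA30.
  set (k := c * (sqrt 3 * b - c) * (b * (sqrt 3 * c - b))).
  assert (k_neq0 : k <> 0).
  { unfold k; repeat apply Rmult_integral_contrapositive_currified; lra. }
  unfold same_point, bary_nonzero, vertexA.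
  split; [tauto | split; [intros [H _]; lra |]].
  exists k; split; [exact k_neq0 | repeat split; ring].
Qed.

End AngleA30.

Theorem theorem4p2 :
  same_point (X18 8 15 (sqrt ((353 + 15 * sqrt 93) / 2))) vertexA.
Proof.
  set (x := (353 + 15 * sqrt 93) / 2).
  set (c := sqrt x).
  assert (sqrt93_sqr : sqrt 93 * sqrt 93 = 93) by (apply sqrt_sqrt; lra).
  assert (x_ge176 : 176 <= x) by (unfold x; pose proof (sqrt_pos 93); lra).
  assert (c_sqr : c ^ 2 = x) by (apply pow2_sqrt; lra).
  assert (c_gt0 : 0 < c) by (apply sqrt_lt_R0; lra).
  assert (x_root : (161 + x) ^ 2 = 675 * x) by (unfold x; nra).
  assert (sqrt_675x : sqrt 3 * 15 * c = sqrt (675 * x)).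
  { replace 675 with (15 ^ 2 * 3) by ring.
    unfold c; rewrite !sqrt_mult_alt, sqrt_pow2 by lra; ring. }
  assert (cos_A : 15 ^ 2 + c ^ 2 - 8 ^ 2 = sqrt 3 * 15 * c).
  { rewrite c_sqr, sqrt_675x, <- x_root, sqrt_pow2 by lra; ring. }
  pose proof sqrt3_sqr.
  apply X18_angleA30; [lra | exact c_gt0 | exact cos_A | |]; intros E;
    apply (f_equal (fun r => r ^ 2)) in E; nra.
Qed.
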